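(* Let $\bm{X}\in\mathbb{R}^{d\times n}$, $1\le K\le\min\{n,d\}$, $h(\bm{P},\bm{Q})=-\langle\bm{P},\bm{X}^T\bm{Q}\rangle+\delta_{\mathcal{B}(n,K)}(\bm{P})+\delta_{{\rm St}(d,K)}(\bm{Q})$, and for $\beta>0$ let $\Psi_\beta(\bm{P},\bm{Q},\bm{Q}')=h(\bm{P},\bm{Q})+\frac\beta2\|\bm{Q}-\bm{Q}'\|_F^2$. If $(\bm{P},\bm{Q},\bm{Q}')\in\mathcal{B}(n,K)\times{\rm St}(d,K)\times\mathbb{R}^{d\times K}$ is a limiting critical point of $\Psi_\beta$, then $\bm{Q}=\bm{Q}'$. Moreover, $(\bm{P},\bm{Q},\bm{Q})$ is a limiting critical point of $\Psi_\beta$ if and only if $(\bm{P},\bm{Q})$ is a limiting critical point of $h$.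
   Context: ${\rm St}(d,K)=\{\bm{Q}\in\mathbb{R}^{d\times K}:\bm{Q}^T\bm{Q}=\bm{I}_K\}$; $\mathcal{B}(n,K)$ is the set of $n\times K$ matrices with entries in $\{\pm1\}$; $\langle\bm{A},\bm{B}\rangle=\operatorname{tr}(\bm{A}^T\bm{B})$; $\delta_{\mathcal{S}}$ is the indicator function. A limiting critical point of a proper lower semicontinuous function $f$ is a point $\bm{x}$ with $\bm{0}\in\partial f(\bm{x})$, where $\partial$ is the limiting subdifferential. *)

From HB Require Import structures.
From mathcomp Require Import all_boot all_order all_algebra.
From mathcomp Require Import all_classical all_reals ereal.
Set Implicit Arguments. Unset Strict Implicit. Unset Printing Implicit Defensive.
Import Order.TTheory GRing.Theory Num.Theory.
Local Open Scope ring_scope.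

Section VarAnal.
Variables (R : realType) (V : zmodType) (ip : V -> V -> R).

Definition ipnorm (x : V) : R := Num.sqrt (ip x x).

(* Frechet (regular) subgradient v of f at x:
   liminf_{y -> x, y <> x} (f y - f x - <v, y - x>) / ||y - x|| >= 0,
   with f x finite. *)
Definition frechet_subgrad (f : V -> \bar R) (x v : V) : Prop :=
  f x \is a fin_num /\
  forall e : R, 0 < e -> exists2 delta : R, 0 < delta &
    forall y : V, ipnorm (y - x) < delta ->
      (f x + (ip v (y - x) - e * ipnorm (y - x))%:E <= f y)%E.

Definition limiting_subgrad (f : V -> \bar R) (x v : V) : Prop :=
  f x \is a fin_num /\
  exists (xs vs : nat -> V),
    (forall k, frechet_subgrad f (xs k) (vs k)) /\
    (forall e : R, 0 < e -> exists N : nat, forall k, (N <= k)%N ->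
        ipnorm (xs k - x) < e /\ ipnorm (vs k - v) < e /\
        `|fine (f (xs k)) - fine (f x)| < e).

Definition limiting_critical (f : V -> \bar R) (x : V) : Prop :=
  limiting_subgrad f x 0.
End VarAnal.

Definition frob (R : realType) (m k : nat) (A B : 'M[R]_(m, k)) : R :=
  \tr (A^T *m B).

Definition frob_norm (R : realType) (m k : nat) (A : 'M[R]_(m, k)) : R :=
  Num.sqrt (frob A A).

Definition ip2 (R : realType) (n d K : nat)
    (x y : 'M[R]_(n, K) * 'M[R]_(d, K)) : R :=
  frob x.1 y.1 + frob x.2 y.2.

Definition ip3 (R : realType) (n d K : nat)
    (x y : 'M[R]_(n, K) * 'M[R]_(d, K) * 'M[R]_(d, K)) : R :=
  frob x.1.1 y.1.1 + frob x.1.2 y.1.2 + frob x.2 y.2.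

Definition pm1_mx (R : realType) (n K : nat) (P : 'M[R]_(n, K)) : Prop :=
  forall i j, P i j = 1 \/ P i j = -1.

Definition stiefel (R : realType) (d K : nat) (Q : 'M[R]_(d, K)) : Prop :=
  Q^T *m Q = 1%:M.

Definition indic (R : realType) (T : Type) (S : T -> Prop) (x : T) : \bar R :=
  if `[< S x >] then 0%E else +oo%E.

Definition h_obj (R : realType) (d n K : nat) (X : 'M[R]_(d, n))
    (z : 'M[R]_(n, K) * 'M[R]_(d, K)) : \bar R :=
  ((- frob z.1 (X^T *m z.2))%:E + @indic R _ (@pm1_mx R n K) z.1
     + @indic R _ (@stiefel R d K) z.2)%E.

Definition Psi_obj (R : realType) (d n K : nat) (X : 'M[R]_(d, n)) (beta : R)
    (z : 'M[R]_(n, K) * 'M[R]_(d, K) * 'M[R]_(d, K)) : \bar R :=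
  (h_obj X z.1 + (beta / 2 * frob_norm (z.1.2 - z.2) ^+ 2)%:E)%E.

(* [Q'] enters [Psi_beta] only through the smooth term (beta/2)||Q - Q'||^2, so
   every Frechet subgradient of [Psi_beta] at (P, Q, Q') has Q'-component
   beta (Q' - Q).  Along a sequence exhibiting 0 as a limiting subgradient these
   components tend to 0 while the points converge, which forces Q = Q'.
   On the diagonal, Frechet subgradients transfer both ways: V at (P, Q) for h
   gives (V, 0) at (P, Q, Q) for [Psi_beta], because [Psi_beta] dominates h and
   agrees with it on the diagonal; conversely (V_P, V_Q, V_Q') gives
   (V_P, V_Q + V_Q') for h, by moving Q and Q' together so that the coupling
   term stays constant.  At a Frechet point the coupling term equals
   ||V_Q'||^2 / (2 beta), so it vanishes along the sequence and the function
   values converge too. *)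

From HB Require Import structures.
From mathcomp Require Import all_boot all_order all_algebra.
From mathcomp Require Import all_classical all_reals ereal.
From mathcomp Require Import ring lra.
Import Order.TTheory GRing.Theory Num.Theory.
Set Implicit Arguments. Unset Strict Implicit. Unset Printing Implicit Defensive.
Local Open Scope ring_scope.

Section Frobenius.
Variables (R : realType) (m k : nat).
Implicit Types A B C : 'M[R]_(m, k).

Lemma frobC A B : frob A B = frob B A.
Proof. by rewrite /frob -mxtrace_tr trmx_mul trmxK. Qed.

Lemma frobDr A B C : frob A (B + C) = frob A B + frob A C.
Proof. by rewrite /frob mulmxDr mxtraceD. Qed.

Lemma frobDl A B C : frob (A + B) C = frob A C + frob B C.
Proof. by rewrite frobC frobDr !(frobC C). Qed.

Lemma frobZr a A B : frob A (a *: B) = a * frob A B.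
Proof. by rewrite /frob -scalemxAr mxtraceZ. Qed.

Lemma frobZl a A B : frob (a *: A) B = a * frob A B.
Proof. by rewrite frobC frobZr frobC. Qed.

Lemma frobNr A B : frob A (- B) = - frob A B.
Proof. by rewrite -scaleN1r frobZr mulN1r. Qed.

Lemma frobNl A B : frob (- A) B = - frob A B.
Proof. by rewrite frobC frobNr frobC. Qed.

Lemma frob0r A : frob A 0 = 0.
Proof. by rewrite /frob mulmx0 mxtrace0. Qed.

Lemma frob0l A : frob 0 A = 0.
Proof. by rewrite frobC frob0r. Qed.

Lemma frob_sqrE A : frob A A = \sum_(j < k) \sum_(i < m) A i j ^+ 2.
Proof.
rewrite /frob /mxtrace; apply: eq_bigr => j _; rewrite mxE.
by apply: eq_bigr => i _; rewrite mxE expr2.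
Qed.

Lemma frob_ge0 A : 0 <= frob A A.
Proof. by rewrite frob_sqrE; do 2!apply: sumr_ge0 => ? _; rewrite sqr_ge0. Qed.

Lemma sqr_entry_le_frob A i j : A i j ^+ 2 <= frob A A.
Proof.
rewrite frob_sqrE (bigD1 j) //= (bigD1 i) //= -addrA lerDl.
by rewrite addr_ge0 // sumr_ge0 // => *; rewrite ?sumr_ge0 // => *; rewrite sqr_ge0.
Qed.

Lemma frob_self_eq0 A : (frob A A == 0) = (A == 0).
Proof.
apply/eqP/eqP => [A0|->]; last exact: frob0r.
apply/matrixP => i j; rewrite mxE; apply/eqP; rewrite -sqrf_eq0 eq_le sqr_ge0 andbT.
by rewrite -A0 sqr_entry_le_frob.
Qed.

Lemma frob_norm_ge0 A : 0 <= frob_norm A.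
Proof. exact: sqrtr_ge0. Qed.

Lemma frob_normE A : frob_norm A ^+ 2 = frob A A.
Proof. by rewrite sqr_sqrtr // frob_ge0. Qed.

Lemma normr_entry_le_frob_norm A i j : `|A i j| <= frob_norm A.
Proof. by rewrite -sqrtr_sqr ler_wsqrtr // sqr_entry_le_frob. Qed.

Lemma frob_normZ a A : 0 <= a -> frob_norm (a *: A) = a * frob_norm A.
Proof.
move=> a_ge0; rewrite /frob_norm frobZl frobZr mulrA -expr2.
by rewrite sqrtrM ?sqr_ge0 // sqrtr_sqr ger0_norm.
Qed.

End Frobenius.

Lemma sqrtr_le_mul (R : rcfType) (a b c : R) :
  0 <= c -> a <= c ^+ 2 * b -> Num.sqrt a <= c * Num.sqrt b.
Proof.
move=> c_ge0 le_ab; rewrite -(ger0_norm c_ge0) -sqrtr_sqr -sqrtrM ?sqr_ge0 //.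
exact: ler_wsqrtr.
Qed.

Section ProductNorms.
Variables (R : realType) (n d K : nat).
Local Notation N2 := (ipnorm (@ip2 R n d K)).
Local Notation N3 := (ipnorm (@ip3 R n d K)).
Implicit Types (w : 'M[R]_(n, K) * 'M[R]_(d, K)).
Implicit Types (z : 'M[R]_(n, K) * 'M[R]_(d, K) * 'M[R]_(d, K)).

Lemma ipnorm2_fst_le z : N2 z.1 <= N3 z.
Proof. by rewrite ler_wsqrtr // lerDl frob_ge0. Qed.

Lemma frob_norm_fst_snd_le z : frob_norm z.1.2 <= N3 z.
Proof.
rewrite ler_wsqrtr // /ip3.
by have := frob_ge0 z.1.1; have := frob_ge0 z.2; lra.
Qed.

Lemma frob_norm_snd_le z : frob_norm z.2 <= N3 z.
Proof. by rewrite ler_wsqrtr // lerDr /ip3 addr_ge0 ?frob_ge0. Qed.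

Lemma ipnorm3_pair0 w : N3 (w, 0) = N2 w.
Proof. by rewrite /ipnorm /ip3 /= frob0r addr0. Qed.

Lemma ipnorm3_snd (Q : 'M[R]_(d, K)) : N3 (0, Q) = frob_norm Q.
Proof. by rewrite /ipnorm /ip3 /= !frob0r !add0r. Qed.

Lemma ipnorm3_dup_le w : N3 (w, w.2) <= 2 * N2 w.
Proof.
apply: sqrtr_le_mul => //; rewrite /ip3 /ip2 /=.
by have := frob_ge0 w.1; have := frob_ge0 w.2; lra.
Qed.

Lemma ipnorm2_merge_le z : N2 (z.1.1, z.1.2 + z.2) <= 2 * N3 z.
Proof.
apply: sqrtr_le_mul => //; rewrite /ip3 /ip2 /= frobDl !frobDr (frobC z.2).
have := frob_ge0 (z.1.2 - z.2); rewrite frobDl !frobDr !frobNl !frobNr opprK (frobC z.2).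
by have := frob_ge0 z.1.1; have := frob_ge0 z.1.2; have := frob_ge0 z.2; lra.
Qed.

End ProductNorms.

Section Vanishing.
Variable R : realType.
Implicit Types u w : nat -> R.

(* For the nonnegative sequences it is applied to, this is [u --> 0], written
   in the epsilon-N style of [limiting_subgrad]. *)
Definition vanishing u : Prop :=
  forall e, 0 < e -> exists N, forall k, (N <= k)%N -> u k < e.

Lemma vanishing_le u w : (forall k, w k <= u k) -> vanishing u -> vanishing w.
Proof.
move=> le_wu u0 e /u0 [N uN]; exists N => k /uN; exact: le_lt_trans.
Qed.

Lemma vanishingZ c u : 0 < c -> vanishing u -> vanishing (fun k => c * u k).
Proof.
move=> c_gt0 u0 e e_gt0; have [N uN] := u0 (e / c) (divr_gt0 e_gt0 c_gt0).
by exists N => k /uN; rewrite ltr_pdivlMr // mulrC.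
Qed.

Lemma vanishingD u w : vanishing u -> vanishing w -> vanishing (fun k => u k + w k).
Proof.
move=> u0 w0 e e_gt0; have e2_gt0 : 0 < e / 2 by rewrite divr_gt0.
have [[Nu uN] [Nw wN]] := (u0 _ e2_gt0, w0 _ e2_gt0).
exists (maxn Nu Nw) => k; rewrite geq_max => /andP[/uN ? /wN ?]; lra.
Qed.

Lemma vanishing_sqr u :
  (forall k, 0 <= u k) -> vanishing u -> vanishing (fun k => u k ^+ 2).
Proof.
move=> u_ge0 u0 e e_gt0.
have [N uN] : exists N, forall k, (N <= k)%N -> u k < Num.sqrt e.
  by apply: u0; rewrite sqrtr_gt0.
exists N => k /uN lt_u; rewrite -(sqr_sqrtr (ltW e_gt0)).
by rewrite ltr_pXn2r // ?nnegrE ?sqrtr_ge0.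
Qed.

Lemma vanishing_ub a u : vanishing u -> (forall k, a <= u k) -> a <= 0.
Proof.
move=> u0 le_au; apply/ler_addgt0Pr => e /u0 [N uN].
by rewrite add0r (le_trans (le_au N)) // ltW // uN.
Qed.

End Vanishing.

Section Subgradients.
Variables (R : realType) (V : zmodType) (ip : V -> V -> R).
Implicit Types (f : V -> \bar R) (x v : V).

Lemma frechet_subgrad_ray_le f x v (p : R -> V) (a b c m : R) :
  0 <= m ->
  (forall t, 0 < t -> ip v (p t - x) = t * c) ->
  (forall t, 0 < t -> ipnorm ip (p t - x) = t * m) ->
  (forall t, 0 < t -> f (p t) = (f x + (t * a + t ^+ 2 * b)%:E)%E) ->
  frechet_subgrad ip f x v -> c <= a.
Proof.
(* Dividing the Frechet inequality at [p t] by [t] gives c - e' m <= a + t b. *)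
move=> m_ge0 ipE normE fE [fx_fin fv]; apply/ler_addgt0Pr => e e_gt0.
have m1_gt0 : 0 < m + 1 by rewrite ltr_wpDl.
have b1_gt0 : 0 < `|b| + 1 by rewrite ltr_wpDl.
set e' := e / 2 / (m + 1).
have e'_gt0 : 0 < e' by rewrite !divr_gt0.
have e'm_le : e' * m <= e / 2.
  have : e' * (m + 1) = e / 2 by rewrite divfK ?gt_eqF.
  by rewrite mulrDr mulr1; lra.
have [delta delta_gt0 near_x] := fv e' e'_gt0.
set t := Num.min (delta / (m + 1)) (e / 2 / (`|b| + 1)).
have t_gt0 : 0 < t by rewrite lt_min !divr_gt0.
have tm_lt : t * m < delta.
  have : t * (m + 1) <= delta by rewrite -ler_pdivlMr // ge_min lexx.
  by rewrite mulrDr mulr1; lra.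
have tb_le : t * b <= e / 2.
  have : t * (`|b| + 1) <= e / 2 by rewrite -ler_pdivlMr // ge_min lexx orbT.
  have : t * b <= t * `|b| by apply: ler_wpM2l; [exact: ltW | exact: ler_norm].
  by rewrite mulrDr mulr1; lra.
have := near_x (p t); rewrite normE // ipE // fE // leeD2lE // lee_fin => /(_ tm_lt).
rewrite (_ : _ - _ = t * (c - e' * m)); last by ring.
rewrite (_ : _ + _ = t * (a + t * b)); last by ring.
rewrite ler_pM2l //; lra.
Qed.

Lemma limiting_subgradP f x v :
  limiting_subgrad ip f x v <->
  f x \is a fin_num /\ exists xs vs : nat -> V,
    (forall k, frechet_subgrad ip f (xs k) (vs k)) /\
    [/\ vanishing (fun k => ipnorm ip (xs k - x)),
        vanishing (fun k => ipnorm ip (vs k - v)) &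
        vanishing (fun k => `|fine (f (xs k)) - fine (f x)|)].
Proof.
split=> -[fx_fin [xs [vs [fv xv_cvg]]]]; split=> //; exists xs, vs; split=> //.
  by split=> e e_gt0; have [N xvN] := xv_cvg e e_gt0; exists N => k /xvN[? []].
case: xv_cvg => xs_cvg vs_cvg fxs_cvg e e_gt0.
have [[N1 h1] [N2 h2] [N3 h3]] :=
  And3 (xs_cvg e e_gt0) (vs_cvg e e_gt0) (fxs_cvg e e_gt0).
by exists (maxn N1 (maxn N2 N3)) => k; rewrite !geq_max => /and3P[/h1 ? /h2 ? /h3 ?].
Qed.

End Subgradients.

Section Coupled.
Variables (R : realType) (n d K : nat).
Local Notation Mn := 'M[R]_(n, K).
Local Notation Md := 'M[R]_(d, K).
Local Notation ip2 := (@ip2 R n d K).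
Local Notation ip3 := (@ip3 R n d K).
Local Notation N3 := (ipnorm ip3).
Variables (f : Mn * Md -> \bar R) (beta : R).
Hypothesis beta_gt0 : 0 < beta.

Definition coupling (z : Mn * Md * Md) : R := beta / 2 * frob_norm (z.1.2 - z.2) ^+ 2.

Definition coupled (z : Mn * Md * Md) : \bar R := (f z.1 + (coupling z)%:E)%E.

Lemma coupling_ge0 z : 0 <= coupling z.
Proof. by rewrite mulr_ge0 ?sqr_ge0 // divr_ge0 ?ltW. Qed.

Lemma coupled_diag w : coupled (w, w.2) = f w.
Proof.
by rewrite /coupled /coupling /= subrr /frob_norm frob0r sqrtr0 expr0n mulr0 adde0.
Qed.

Lemma fin_num_coupled z : (coupled z \is a fin_num) = (f z.1 \is a fin_num).
Proof. by rewrite fin_numD andbT. Qed.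

Lemma fine_coupled z :
  f z.1 \is a fin_num -> fine (coupled z) = fine (f z.1) + coupling z.
Proof. by move=> fz_fin; rewrite fineD. Qed.

Lemma frechet_subgrad_coupled_snd z v :
  frechet_subgrad ip3 coupled z v -> v.2 = beta *: (z.2 - z.1.2).
Proof.
move=> zv; set w := v.2 - beta *: (z.2 - z.1.2).
suff /eqP : w = 0 by rewrite subr_eq0 => /eqP.
have ray t : (z.1, z.2 + t *: w) - z = (0, t *: w).
  by apply: injective_projections; rewrite /= ?subrr // addrC addKr.
have slope : frob v.2 w <= beta * frob (z.2 - z.1.2) w.
  apply: (frechet_subgrad_ray_le (p := fun t => (z.1, z.2 + t *: w))
            (b := beta / 2 * frob w w) (m := frob_norm w) _ _ _ _ zv).
  - exact: frob_norm_ge0.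
  - by move=> t _; rewrite ray /ip3 /= !frob0r !add0r frobZr.
  - by move=> t t_gt0; rewrite ray ipnorm3_snd frob_normZ // ltW.
  - move=> t _; rewrite /coupled /coupling /= -addeA -EFinD !frob_normE.
    congr (_ + _%:E); rewrite opprD addrA -[z.2 - z.1.2]opprB.
    move: (z.1.2 - z.2) => D; clearbody w.
    by rewrite !(frobDl, frobDr, frobNl, frobNr, frobZl, frobZr) (frobC w); field.
apply/eqP; rewrite -frob_self_eq0 eq_le frob_ge0 andbT.
have -> : frob w w = frob v.2 w - beta * frob (z.2 - z.1.2) w.
  by rewrite /w frobDl frobNl frobZl.
by rewrite subr_le0.
Qed.

Lemma coupling_subgrad z v :
  frechet_subgrad ip3 coupled z v -> coupling z = (2 * beta)^-1 * frob_norm v.2 ^+ 2.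
Proof.
move=> /frechet_subgrad_coupled_snd ->; rewrite /coupling !frob_normE.
rewrite -[z.2 - z.1.2]opprB frobZl frobZr frobNl frobNr opprK.
by field; rewrite gt_eqF.
Qed.

Lemma frechet_subgrad_coupled_fst z v :
  frechet_subgrad ip3 coupled z v -> frechet_subgrad ip2 f z.1 (v.1.1, v.1.2 + v.2).
Proof.
move=> [cz_fin zv]; have fz_fin : f z.1 \is a fin_num by rewrite -fin_num_coupled.
split=> // e e_gt0; have e2_gt0 : 0 < e / 2 by rewrite divr_gt0.
have [delta delta_gt0 near_z] := zv (e / 2) e2_gt0.
exists (delta / 2) => [|y y_near]; first by rewrite divr_gt0.
set w := y - z.1.
have lift : (y, z.2 + w.2) - z = (w, w.2).
  by apply: injective_projections; rewrite //= addrC addKr.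
have N3_le := ipnorm3_dup_le w.
have N3_lt : N3 (w, w.2) < delta by lra.
have := near_z (y, z.2 + w.2); rewrite lift => /(_ N3_lt).
rewrite /coupled /coupling /= (_ : y.2 - (z.2 + w.2) = z.1.2 - z.2); last first.
  by apply/matrixP => i j; rewrite !mxE; ring.
rewrite addeAC leeD2rE // => /(le_trans _); apply; rewrite leeD2lE // lee_fin.
have -> : ip3 v (w, w.2) = ip2 (v.1.1, v.1.2 + v.2) w.
  by rewrite /ip3 /ip2 /= frobDl addrA.
have : e / 2 * N3 (w, w.2) <= e * ipnorm ip2 w.
  apply: le_trans (ler_wpM2l _ N3_le) _; first by rewrite divr_ge0 ?ltW.
  by rewrite mulrA divfK.
lra.
Qed.

Lemma frechet_subgrad_coupled_diag w v :
  frechet_subgrad ip2 f w v -> frechet_subgrad ip3 coupled (w, w.2) (v, 0).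
Proof.
move=> [fw_fin wv]; split=> [|e e_gt0]; first by rewrite coupled_diag.
have [delta delta_gt0 near_w] := wv e e_gt0; exists delta => // y y_near.
have N2_le := ipnorm2_fst_le (y - (w, w.2)).
rewrite coupled_diag; apply: le_trans (leeDl _ _); last by rewrite lee_fin coupling_ge0.
apply: le_trans (near_w y.1 (le_lt_trans N2_le y_near)); rewrite leeD2lE // lee_fin.
have -> : ip3 (v, 0) (y - (w, w.2)) = ip2 v (y.1 - w).
  by rewrite /ip3 /ip2 /= frob0l addr0.
have : e * ipnorm ip2 (y.1 - w) <= e * N3 (y - (w, w.2)) by rewrite ler_pM2l.
lra.
Qed.

Lemma limiting_critical_coupled_eq z : limiting_critical ip3 coupled z -> z.1.2 = z.2.
Proof.
move=> /limiting_subgradP[_ [xs [vs [zv [xs_cvg vs_cvg _]]]]].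
apply/matrixP => i j; apply/eqP; rewrite -subr_eq0 -normr_le0.
apply: (vanishing_ub (u := fun k => 2 * N3 (xs k - z) + beta^-1 * N3 (vs k - 0))).
  by apply: vanishingD; apply: vanishingZ; rewrite ?invr_gt0.
move=> k; set dz := xs k - z.
have -> : z.1.2 i j - z.2 i j = dz.2 i j - dz.1.2 i j - beta^-1 * (vs k).2 i j.
  rewrite /dz /= (frechet_subgrad_coupled_snd (zv k)) !mxE mulrA mulVf ?gt_eqF //.
  by ring.
have dz2_le := le_trans (normr_entry_le_frob_norm dz.2 i j) (frob_norm_snd_le dz).
have dz12_le := le_trans (normr_entry_le_frob_norm dz.1.2 i j) (frob_norm_fst_snd_le dz).
have vs_le : `|beta^-1 * (vs k).2 i j| <= beta^-1 * N3 (vs k - 0).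
  rewrite subr0 normrM gtr0_norm ?ler_pM2l ?invr_gt0 //.
  exact: le_trans (normr_entry_le_frob_norm _ i j) (frob_norm_snd_le _).
apply: le_trans (ler_normB _ _) _; apply: le_trans (lerD (ler_normB _ _) vs_le) _.
lra.
Qed.

Lemma limiting_critical_coupled_proj w :
  limiting_critical ip3 coupled (w, w.2) -> limiting_critical ip2 f w.
Proof.
move=> /limiting_subgradP[+ [xs [vs [zv [xs_cvg vs_cvg fxs_cvg]]]]].
rewrite coupled_diag => fw_fin; apply/limiting_subgradP; split=> //.
exists (fun k => (xs k).1), (fun k => ((vs k).1.1, (vs k).1.2 + (vs k).2)); split.
  by move=> k; exact: frechet_subgrad_coupled_fst.
split.
- by apply: vanishing_le xs_cvg => k; exact: (ipnorm2_fst_le (xs k - (w, w.2))).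
- apply: vanishing_le (vanishingZ (_ : 0 < 2) vs_cvg) => // k.
  by rewrite !subr0; exact: ipnorm2_merge_le.
have c_gt0 : 0 < (2 * beta)^-1 by rewrite invr_gt0 mulr_gt0.
have vs_sqr : vanishing (fun k => N3 (vs k - 0) ^+ 2).
  exact: vanishing_sqr (fun k => sqrtr_ge0 _) vs_cvg.
apply: vanishing_le (vanishingD fxs_cvg (vanishingZ c_gt0 vs_sqr)) => k /=.
have fxs_fin : f (xs k).1 \is a fin_num by rewrite -fin_num_coupled; case: (zv k).
rewrite coupled_diag fine_coupled //.
have c_le : coupling (xs k) <= (2 * beta)^-1 * N3 (vs k - 0) ^+ 2.
  rewrite (coupling_subgrad (zv k)) subr0 ler_pM2l //.
  rewrite lerXn2r ?nnegrE ?frob_norm_ge0 ?sqrtr_ge0 //.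
  exact: frob_norm_snd_le.
have := ler_normB (fine (f (xs k).1) + coupling (xs k) - fine (f w)) (coupling (xs k)).
rewrite addrAC addrK (ger0_norm (coupling_ge0 _)); lra.
Qed.

Lemma limiting_critical_coupled_diag w :
  limiting_critical ip2 f w -> limiting_critical ip3 coupled (w, w.2).
Proof.
move=> /limiting_subgradP[fw_fin [xs [vs [wv [xs_cvg vs_cvg fxs_cvg]]]]].
apply/limiting_subgradP; split; first by rewrite coupled_diag.
exists (fun k => (xs k, (xs k).2)), (fun k => (vs k, 0)); split.
  by move=> k; exact: frechet_subgrad_coupled_diag.
split.
- apply: vanishing_le (vanishingZ (_ : 0 < 2) xs_cvg) => // k.
  exact: ipnorm3_dup_le.
- by apply: vanishing_le vs_cvg => k; rewrite !subr0 ipnorm3_pair0.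
- by apply: vanishing_le fxs_cvg => k; rewrite !coupled_diag.
Qed.

End Coupled.

Theorem lemma2 (R : realType) (d n K : nat) (X : 'M[R]_(d, n)) (beta : R)
    (P : 'M[R]_(n, K)) (Q Q' : 'M[R]_(d, K)) :
  (1 <= K)%N -> (K <= minn n d)%N -> 0 < beta ->
  pm1_mx P -> stiefel Q ->
  (limiting_critical (@ip3 R n d K) (Psi_obj X beta) (P, Q, Q') -> Q = Q') /\
  (limiting_critical (@ip3 R n d K) (Psi_obj X beta) (P, Q, Q) <->
   limiting_critical (@ip2 R n d K) (h_obj X) (P, Q)).
Proof.
move=> _ _ beta_gt0 _ _; have -> : Psi_obj X beta = coupled (h_obj X) beta by [].
split; first by move/(limiting_critical_coupled_eq beta_gt0).
by split; [apply: limiting_critical_coupled_proj | apply: limiting_critical_coupled_diag].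
Qed.
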